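(* For any probability distributions $\mathbf{p},\mathbf{q}$ on $G_\Delta$ (i.e. $\mathbf{p},\mathbf{q}\in\mathbb{R}_{\ge0}^{G_\Delta}$ with $\|\mathbf{p}\|_1=\|\mathbf{q}\|_1=1$) and any $\sigma>0$, $\mathrm{KL}(\tilde H^\sigma_{\mathbf{p}}\,\|\,\tilde H^\sigma_{\mathbf{q}})\le\frac{\mathrm{EMD}(\mathbf{p},\mathbf{q})}{2\sigma^2}$.
   Context: $G_\Delta=\{(i/\Delta,j/\Delta):i,j\in\{0,\dots,\Delta-1\}\}$, $\tilde G_\Delta=\{(i/\Delta,j/\Delta):i,j\in\mathbb{Z}\}$. $\tilde H^\sigma_{\mathbf{p}}(a)=\sum_{a'\in G_\Delta}\frac1Z e^{-\|a-a'\|_2^2/(2\sigma^2)}\mathbf{p}(a')$ for $a\in\tilde G_\Delta$, with $Z=\sum_{d\in\tilde G_\Delta}e^{-\|d\|_2^2/(2\sigma^2)}$. $\mathrm{KL}(P\|Q)=\sum_a P(a)\ln(P(a)/Q(a))$. $\mathrm{EMD}(\mathbf{p},\mathbf{q})=\min_\gamma\sum_{x,y\in G_\Delta}\gamma(x,y)\|x-y\|_1$ over nonnegative couplings $\gamma$ with marginals $\mathbf{p},\mathbf{q}$. *)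

From HB Require Import structures.
From mathcomp Require Import all_boot all_order all_algebra.
From mathcomp Require Import all_classical all_reals all_analysis.
Set Implicit Arguments. Unset Strict Implicit. Unset Printing Implicit Defensive.
Import Order.TTheory GRing.Theory Num.Theory.
Local Open Scope ring_scope.

(* The finite grid G_Delta = {(i/Delta, j/Delta) : i,j in {0..Delta-1}},
   indexed by (i,j) : 'I_Delta * 'I_Delta. *)
Definition grid (Delta : nat) := ('I_Delta * 'I_Delta)%type.

(* The infinite lattice tilde G_Delta = {(i/Delta, j/Delta) : i,j in Z},
   indexed by (i,j) : int * int. *)
Definition lattice := (int * int)%type.

Definition lattice_sum {R : realType} (f : lattice -> R) : R :=
  limn (fun N : nat => \sum_(i < (2 * N).+1) \sum_(j < (2 * N).+1)
          f ((i%:Z - N%:Z)%R, (j%:Z - N%:Z)%R)).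

Definition sqdist {R : realType} (Delta : nat) (a : lattice) (a' : grid Delta) : R :=
  ((a.1%:~R - (a'.1 : nat)%:R) / Delta%:R) ^+ 2
  + ((a.2%:~R - (a'.2 : nat)%:R) / Delta%:R) ^+ 2.

Definition Znorm {R : realType} (Delta : nat) (sigma : R) : R :=
  lattice_sum (fun d : lattice =>
    expR (- (((d.1%:~R / Delta%:R) ^+ 2 + (d.2%:~R / Delta%:R) ^+ 2)
             / (2 * sigma ^+ 2)))).

Definition Htilde {R : realType} (Delta : nat) (sigma : R)
    (p : grid Delta -> R) (a : lattice) : R :=
  \sum_(a' : grid Delta)
     (Znorm Delta sigma)^-1 * expR (- (@sqdist R Delta a a' / (2 * sigma ^+ 2))) * p a'.

Definition KL {R : realType} (P Q : lattice -> R) : R :=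
  lattice_sum (fun a => P a * ln (P a / Q a)).

Definition is_distr {R : realType} (Delta : nat) (p : grid Delta -> R) : Prop :=
  (forall x, 0 <= p x) /\ \sum_(x : grid Delta) p x = 1.

Definition is_coupling {R : realType} (Delta : nat) (p q : grid Delta -> R)
    (g : grid Delta -> grid Delta -> R) : Prop :=
  (forall x y, 0 <= g x y) /\
  (forall x, \sum_(y : grid Delta) g x y = p x) /\
  (forall y, \sum_(x : grid Delta) g x y = q y).

Definition l1dist {R : realType} (Delta : nat) (x y : grid Delta) : R :=
  `|((x.1 : nat)%:R - (y.1 : nat)%:R) / Delta%:R|
  + `|((x.2 : nat)%:R - (y.2 : nat)%:R) / Delta%:R|.

Definition transport_cost {R : realType} (Delta : nat)
    (g : grid Delta -> grid Delta -> R) : R :=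
  \sum_(x : grid Delta) \sum_(y : grid Delta) g x y * @l1dist R Delta x y.

(* EMD(p,q) = min over couplings of the transport cost (taken as inf; the
   minimum is attained, so they agree). *)
Definition EMD {R : realType} (Delta : nat) (p q : grid Delta -> R) : R :=
  inf [set @transport_cost R Delta g | g in is_coupling p q].

From HB Require Import structures.
From mathcomp Require Import all_boot all_order all_algebra.
From mathcomp Require Import all_classical all_reals all_analysis.
From mathcomp Require Import zify ring lra.
Import Order.TTheory GRing.Theory Num.Theory.
Import numFieldNormedType.Exports.
Local Open Scope classical_set_scope.
Local Open Scope ring_scope.
Set Implicit Arguments. Unset Strict Implicit. Unset Printing Implicit Defensive.

(* Write [Htilde sigma p a = \sum_x K(a, x) p(x)] with the Gaussian kernel
   [K(a, x) = Z^-1 exp (- |a - x|^2 / 2 sigma^2)].  Given a coupling [gam] of [p]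
   and [q], the log-sum inequality with weights [gam x y] bounds the KL density
   pointwise:
     H_p(a) ln (H_p(a) / H_q(a)) <= \sum_(x, y) gam x y K(a, x) ln (K(a, x) / K(a, y))
                                  = \sum_(x, y) gam x y K(a, x) (|a - y|^2 - |a - x|^2) / 2 sigma^2.
   Summed over the lattice, [K(., x)] has mass 1 and mean [x], so the right-hand
   side becomes [\sum_(x, y) gam x y |x - y|^2 / 2 sigma^2]; on the unit square
   [|x - y|^2 <= |x - y|_1], and the infimum over couplings gives the EMD.
   Lattice sums are limits over the boxes [[-N, N]^2], so each of them has to be
   shown to converge: the Gaussian is dominated by a geometric sequence, shifting
   a sequence whose first moments are bounded does not change its sum, and the KL
   sum converges because its terms are bounded below by the summable [H_p - H_q]. *)

Section BoxSums.
Variable R : realType.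
Implicit Types (h : int -> R) (f g : lattice -> R).

Definition box_sum N h : R := \sum_(i < (2 * N).+1) h (i%:Z - N%:Z).

Lemma box_sumS N h : box_sum N.+1 h = h (- N.+1%:Z) + box_sum N h + h N.+1%:Z.
Proof.
rewrite /box_sum (_ : (2 * N.+1).+1 = (2 * N).+3) ?mulnS //.
rewrite big_ord_recl big_ord_recr /= -addrA.
congr (_ + (_ + _)); [| apply: eq_bigr => i _ |].
all: congr h; rewrite /bump /= ?leq0n ?add1n; lia.
Qed.

Lemma box_sum_shift1 N h :
  box_sum N (fun k => h (k - 1)) = h (- N.+1%:Z) + box_sum N h - h N%:Z.
Proof.
have shiftS : box_sum N.+1 h = box_sum N (fun k => h (k - 1)) + h N%:Z + h N.+1%:Z.
  rewrite /box_sum (_ : (2 * N.+1).+1 = (2 * N).+3) ?mulnS // 2!big_ord_recr /=.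
  by congr (_ + _ + _); [apply: eq_bigr => i _ | |]; congr h; lia.
by move: shiftS; rewrite box_sumS => E; lra.
Qed.

Definition box_shift_defect h (s N : nat) : R :=
  \sum_(j < s) (h (- (N.+1 + j)%:Z) - h (N%:Z - j%:Z)).

Lemma box_sum_shift N h (s : nat) :
  box_sum N (fun k => h (k - s%:Z)) = box_sum N h + box_shift_defect h s N.
Proof.
elim: s => [|s IH].
  by rewrite /box_shift_defect big_ord0 addr0; apply: eq_bigr => i _; rewrite subr0.
have -> : box_sum N (fun k => h (k - s.+1%:Z))
    = box_sum N (fun k => (fun k => h (k - s%:Z)) (k - 1)).
  by apply: eq_bigr => i _; congr h; lia.
rewrite (box_sum_shift1 N (fun k => h (k - s%:Z))) IH /box_shift_defect big_ord_recr /=.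
have -> : - N.+1%:Z - s%:Z = - (N.+1 + s)%:Z by lia.
ring.
Qed.

Lemma box_sum_odd N h : (forall k, h (- k) = - h k) -> box_sum N h = 0.
Proof.
move=> h_odd.
have sum_eq_opp : box_sum N h = - box_sum N h.
  rewrite {1}/box_sum (reindex_inj rev_ord_inj) /= /box_sum -sumrN.
  apply: eq_bigr => i _; rewrite -h_odd; congr h.
  by have := ltn_ord i; lia.
by apply/eqP; rewrite -[_ == 0](mulrn_eq0 _ 2) mulr2n {1}sum_eq_opp addNr.
Qed.

Lemma ler_box_sum N h1 h2 : (forall k, h1 k <= h2 k) -> box_sum N h1 <= box_sum N h2.
Proof. by move=> h12; apply: ler_sum => i _. Qed.

Lemma box_sum_nondecreasing h : (forall k, 0 <= h k) -> nondecreasing_seq (fun N => box_sum N h).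
Proof.
move=> h0; apply/nondecreasing_seqP => N; rewrite box_sumS.
by have := h0 (- N.+1%:Z); have := h0 N.+1%:Z; lra.
Qed.

Definition lattice_box_sum N f : R := box_sum N (fun i => box_sum N (fun j => f (i, j))).

Lemma lattice_sumE f : lattice_sum f = limn (fun N => lattice_box_sum N f).
Proof. by []. Qed.

Lemma eq_lattice_box_sum N f g : f =1 g -> lattice_box_sum N f = lattice_box_sum N g.
Proof. by move=> fg; apply: eq_bigr => i _; apply: eq_bigr => j _; rewrite fg. Qed.

Lemma lattice_box_sum_mul N (h1 h2 : int -> R) :
  lattice_box_sum N (fun a => h1 a.1 * h2 a.2) = box_sum N h1 * box_sum N h2.
Proof.
by rewrite /lattice_box_sum /box_sum mulr_suml; apply: eq_bigr => i _; rewrite mulr_sumr.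
Qed.

Lemma lattice_box_sumD N f g :
  lattice_box_sum N (fun a => f a + g a) = lattice_box_sum N f + lattice_box_sum N g.
Proof.
by rewrite /lattice_box_sum /box_sum -big_split; apply: eq_bigr => i _; rewrite big_split.
Qed.

Lemma lattice_box_sumB N f g :
  lattice_box_sum N (fun a => f a - g a) = lattice_box_sum N f - lattice_box_sum N g.
Proof. by rewrite /lattice_box_sum /box_sum -sumrB; apply: eq_bigr => i _; rewrite sumrB. Qed.

Lemma lattice_box_sumZ N c f :
  lattice_box_sum N (fun a => c * f a) = c * lattice_box_sum N f.
Proof.
by rewrite /lattice_box_sum /box_sum mulr_sumr; apply: eq_bigr => i _; rewrite mulr_sumr.
Qed.

Lemma lattice_box_sum_sum (I : finType) N (F : I -> lattice -> R) :
  lattice_box_sum N (fun a => \sum_(x : I) F x a) = \sum_(x : I) lattice_box_sum N (F x).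
Proof.
rewrite /lattice_box_sum /box_sum [RHS]exchange_big; apply: eq_bigr => i _.
by rewrite exchange_big.
Qed.

Lemma ler_lattice_box_sum N f g : (forall a, f a <= g a) ->
  lattice_box_sum N f <= lattice_box_sum N g.
Proof. by move=> fg; apply: ler_box_sum => i; apply: ler_box_sum. Qed.

Lemma lattice_box_sum_nondecreasing f : (forall a, 0 <= f a) ->
  nondecreasing_seq (fun N => lattice_box_sum N f).
Proof.
move=> f0; apply/nondecreasing_seqP => N; rewrite /lattice_box_sum.
apply: (@le_trans _ _ (box_sum N (fun i => box_sum N.+1 (fun j => f (i, j))))).
  by apply: ler_box_sum => i; apply: box_sum_nondecreasing (leqnSn N) => j.
by apply: box_sum_nondecreasing (leqnSn N) => i; apply: sumr_ge0.
Qed.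

End BoxSums.

Section BoxSumLimits.
Variable R : realType.
Implicit Types (h : int -> R) (f g u : lattice -> R).

Lemma cvg_sum (I : finType) (F : I -> nat -> R) (l : I -> R) :
  (forall i, F i @ \oo --> l i) -> (fun N => \sum_i F i N) @ \oo --> \sum_i l i.
Proof. by move=> Fl; apply: cvg_big => //; exact: add_continuous. Qed.

Lemma cvg_shift_to0 h K (c : int) : (forall k, `|h k| * `|k%:~R : R| <= K) ->
  (fun n : nat => h (n%:Z + c)) @ \oo --> 0.
Proof.
move=> hK; apply/cvgr0Pnorm_lt => e e0.
have K0 : 0 <= K by apply: le_trans (hK 0); rewrite mulr_ge0.
near=> n.
have n_big : K / e + `|c%:~R : R| < n%:R by near: n; apply: nbhs_infty_gtr.
set m := `|(n%:Z + c)%:~R : R|.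
have m_ge : n%:R - `|c%:~R : R| <= m.
  rewrite /m intrD; apply: le_trans (ler_norm _).
  by have := ler_norm (- (c%:~R : R)); rewrite normrN; lra.
have Km : K < e * m by rewrite mulrC -ltr_pdivrMr //; lra.
have := hK (n%:Z + c); rewrite -/m.
have : 0 <= m by apply: normr_ge0.
nra.
Unshelve. all: by end_near.
Qed.

Lemma cvg_box_shift_defect h K (s : nat) : (forall k, `|h k| * `|k%:~R : R| <= K) ->
  box_shift_defect h s @ \oo --> 0.
Proof.
move=> hK; rewrite /box_shift_defect; elim: s => [|s IH].
  by under eq_fun do rewrite big_ord0; exact: cvg_cst.
under eq_fun do rewrite big_ord_recr /=.
have left_tail : (fun N : nat => h (- (N.+1 + s)%:Z)) @ \oo --> 0.
  have hNK : forall k, `|h (- k)| * `|k%:~R : R| <= K.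
    by move=> k; have := hK (- k); rewrite intrN normrN.
  suff -> : (fun N : nat => h (- (N.+1 + s)%:Z)) = (fun n : nat => h (- (n%:Z + s.+1%:Z))).
    exact: cvg_shift_to0 hNK.
  by apply/funext => n; congr h; lia.
have right_tail := cvg_shift_to0 (- s%:Z) hK.
by have := cvgD IH (cvgB left_tail right_tail); rewrite subr0 addr0; apply.
Qed.

Lemma cvg_box_sum_shift h K (l : R) (s : nat) : (forall k, `|h k| * `|k%:~R : R| <= K) ->
  (fun N => box_sum N h) @ \oo --> l -> (fun N => box_sum N (fun k => h (k - s%:Z))) @ \oo --> l.
Proof.
move=> hK hl; under eq_fun do rewrite box_sum_shift.
by rewrite -[l]addr0; apply: cvgD hl (cvg_box_shift_defect s hK).
Qed.

Lemma is_cvg_box_sum_geometric h r : (forall k, 0 <= h k) -> 0 <= r < 1 ->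
  (forall m : nat, h m%:Z <= r ^+ m /\ h (- m%:Z) <= r ^+ m) -> cvgn (fun N => box_sum N h).
Proof.
move=> h0 /andP[r0 r1] h_geo.
have r1' : 1 - r != 0 by rewrite subr_eq0 eq_sym lt_eqF.
have bound N : box_sum N h <= (1 + r - 2 * r ^+ N.+1) / (1 - r).
  elim: N => [|N IH].
    rewrite /box_sum big_ord1 /= expr1 (_ : 1 + r - 2 * r = 1 - r); last by ring.
    by rewrite divff // -[1](expr0 r); case: (h_geo 0%N).
  rewrite box_sumS; have [hl hr] := h_geo N.+1.
  have -> : (1 + r - 2 * r ^+ N.+2) / (1 - r)
      = 2 * r ^+ N.+1 + (1 + r - 2 * r ^+ N.+1) / (1 - r).
    by rewrite [r ^+ N.+2]exprS; move: (r ^+ N.+1) => t; field.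
  lra.
apply/cvg_ex; eexists; apply: nondecreasing_cvgn (box_sum_nondecreasing h0) _.
exists ((1 + r) / (1 - r)) => _ [N _ <-]; apply: le_trans (bound N) _.
rewrite ler_pM2r ?invr_gt0 ?subr_gt0 //.
by have := exprn_ge0 N.+1 r0; lra.
Qed.

Lemma ler_lattice_sum f u g (l : R) :
  (forall a, 0 <= f a + u a) -> (forall a, f a <= g a) ->
  cvgn (fun N => lattice_box_sum N u) -> (fun N => lattice_box_sum N g) @ \oo --> l ->
  lattice_sum f <= l.
Proof.
move=> fu0 fg cu cg.
have cfu : cvgn (fun N => lattice_box_sum N (fun a => f a + u a)).
  have [M hM] := cvg_has_ub (is_cvgD (cvgP l cg) cu).
  apply/cvg_ex; eexists; apply: nondecreasing_cvgn (lattice_box_sum_nondecreasing fu0) _.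
  exists M => _ [N _ <-]; rewrite lattice_box_sumD.
  apply: (@le_trans _ _ (lattice_box_sum N g + lattice_box_sum N u)).
    by rewrite lerD2r; apply: ler_lattice_box_sum.
  by apply: le_trans (ler_norm _) _; apply: hM; exists N.
have cf : cvgn (fun N => lattice_box_sum N f).
  have -> : (fun N => lattice_box_sum N f)
      = (fun N => lattice_box_sum N (fun a => f a + u a) - lattice_box_sum N u).
    by apply/funext => N; rewrite lattice_box_sumD addrK.
  exact: is_cvgB cfu cu.
rewrite lattice_sumE; apply: ler_cvg_to cf cg _.
by apply: nearW => N; apply: ler_lattice_box_sum.
Qed.

End BoxSumLimits.

Section LogInequalities.
Variable R : realType.

Lemma one_subV_le_ln (t : R) : 0 < t -> 1 - t^-1 <= ln t.
Proof.
move=> t0; have tV0 : 0 < t^-1 by rewrite invr_gt0.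
have := @le_ln1Dx _ (t^-1 - 1) ltac:(lra).
by rewrite addrC subrK lnV ?posrE //; lra.
Qed.

Lemma kl_term_ge0 (P Q : R) : 0 < P -> 0 < Q -> 0 <= P * ln (P / Q) + (Q - P).
Proof.
move=> P0 Q0; have := ler_wpM2l (ltW P0) (one_subV_le_ln (divr_gt0 P0 Q0)).
rewrite invf_div mulrBr mulr1 mulrCA divff ?gt_eqF // mulr1; lra.
Qed.

Lemma log_sum_le (I : finType) (w a b : I -> R) :
  (forall i, 0 <= w i) -> (forall i, 0 < a i) -> (forall i, 0 < b i) ->
  0 < \sum_i w i * a i -> 0 < \sum_i w i * b i ->
  (\sum_i w i * a i) * ln ((\sum_i w i * a i) / (\sum_i w i * b i))
    <= \sum_i w i * a i * ln (a i / b i).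
Proof.
move=> w0 a0 b0; set A := \sum_i w i * a i; set B := \sum_i w i * b i => A0 B0.
have AB0 : 0 < A / B by rewrite divr_gt0.
rewrite -subr_ge0.
rewrite (_ : _ - _ = \sum_i (w i * a i * ln (a i / b i) - w i * a i * ln (A / B))); last first.
  by rewrite sumrB -mulr_suml.
have balance : \sum_i (w i * a i - w i * b i * (A / B)) = 0.
  by rewrite sumrB -mulr_suml -/A -/B mulrCA divff ?mulr1 ?subrr // gt_eqF.
rewrite -[X in X <= _]balance; apply: ler_sum => i _; rewrite -mulrBr.
have ab0 : 0 < a i / b i by rewrite divr_gt0.
have := one_subV_le_ln (divr_gt0 ab0 AB0).
rewrite [ln (_ / (A / B))]ln_div ?posrE // invf_div => H.
have := ler_wpM2l (mulr_ge0 (w0 i) (ltW (a0 i))) H.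
by congr (_ <= _); field; rewrite !gt_eqF.
Qed.

End LogInequalities.

Section Smoothing.
Variables (R : realType) (Delta : nat) (sigma : R).
Hypotheses (Delta_gt0 : (0 < Delta)%N) (sigma_gt0 : 0 < sigma).
Local Notation s2 := (2 * sigma ^+ 2).

Definition gauss (k : int) : R := expR (- ((k%:~R / Delta%:R) ^+ 2 / s2)).
Definition gauss_moment (k : int) : R := gauss k * (k%:~R / Delta%:R).

Lemma s2_gt0 : 0 < s2.
Proof. by rewrite mulr_gt0 // exprn_gt0. Qed.

Lemma Delta_gt0R : 0 < Delta%:R :> R.
Proof. by rewrite ltr0n. Qed.

Lemma gauss_gt0 k : 0 < gauss k.
Proof. exact: expR_gt0. Qed.

Lemma gaussN k : gauss (- k) = gauss k.
Proof. by rewrite /gauss intrN mulNr sqrrN. Qed.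

Lemma gauss_momentN k : gauss_moment (- k) = - gauss_moment k.
Proof. by rewrite /gauss_moment gaussN intrN mulNr mulrN. Qed.

Lemma gauss0 : gauss 0 = 1.
Proof. by rewrite /gauss mul0r expr0n /= mul0r oppr0 expR0. Qed.

Lemma gauss_le1 k : gauss k <= 1.
Proof.
by rewrite -expR0 ler_expR oppr_le0 divr_ge0 ?sqr_ge0 // ltW // s2_gt0.
Qed.

(* From [y <= exp y] at [y = t^2 / s2]. *)
Lemma gauss_sqr_le k : gauss k * (k%:~R / Delta%:R) ^+ 2 <= s2.
Proof.
set t := k%:~R / Delta%:R; set y := t ^+ 2 / s2.
have s0 := s2_gt0.
have y_le : y <= expR y by apply: le_trans (expR_ge1Dx y); lra.
have gy : gauss k * expR y = 1 by rewrite /gauss -/t -/y -expRD addNr expR0.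
have : gauss k * y <= 1 by rewrite -gy ler_wpM2l // ltW // gauss_gt0.
by rewrite /y mulrA ler_pdivrMr // mul1r.
Qed.

Lemma normr_intr_Delta k : `|k%:~R : R| = Delta%:R * `|k%:~R / Delta%:R|.
Proof.
by rewrite normrM normfV (ger0_norm (ltW Delta_gt0R)) mulrC divfK // gt_eqF // Delta_gt0R.
Qed.

Lemma gauss_weighted_le k : `|gauss k| * `|k%:~R : R| <= Delta%:R * (s2 + 1).
Proof.
rewrite normr_intr_Delta (ger0_norm (ltW (gauss_gt0 k))).
have := gauss_sqr_le k; have := gauss_gt0 k; have := gauss_le1 k; have := Delta_gt0R.
set t := k%:~R / Delta%:R => D0 g1 g0 gt2.
have t_le : `|t| <= t ^+ 2 + 1.
  have : `|t| ^+ 2 = t ^+ 2 by rewrite real_normK // num_real.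
  by have := normr_ge0 t; nra.
have : gauss k * `|t| <= gauss k * (t ^+ 2 + 1) by rewrite ler_wpM2l // ltW.
nra.
Qed.

Lemma gauss_moment_weighted_le k :
  `|gauss_moment k| * `|k%:~R : R| <= Delta%:R * (s2 + 1).
Proof.
rewrite normr_intr_Delta /gauss_moment normrM (ger0_norm (ltW (gauss_gt0 k))).
have := gauss_sqr_le k; have := gauss_gt0 k; have := Delta_gt0R.
set t := k%:~R / Delta%:R => D0 g0 gt2.
have -> : gauss k * `|t| * (Delta%:R * `|t|) = Delta%:R * (gauss k * t ^+ 2).
  by rewrite -[t ^+ 2]real_normK ?num_real //; ring.
by rewrite ler_wpM2l ?ltW //; lra.
Qed.

Lemma gauss_le_geometric (m : nat) :
  gauss m%:Z <= expR (- (s2 * Delta%:R ^+ 2)^-1) ^+ m.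
Proof.
rewrite /gauss -expRM_natl ler_expR mulrN lerN2.
have s0 := s2_gt0; have D0 := Delta_gt0R.
have -> : (m%:R / Delta%:R) ^+ 2 / s2 = m%:R ^+ 2 * (s2 * Delta%:R ^+ 2)^-1 :> R.
  by field; rewrite !gt_eqF.
apply: ler_wpM2r; first by rewrite invr_ge0 ltW // mulr_gt0 // exprn_gt0.
case: m => [|m]; first by rewrite expr0n.
by rewrite expr2 ler_peMl // ler1n.
Qed.

Lemma is_cvg_box_sum_gauss : cvgn (fun N => box_sum N gauss).
Proof.
apply: (@is_cvg_box_sum_geometric _ _ (expR (- (s2 * Delta%:R ^+ 2)^-1))).
- by move=> k; apply: ltW; apply: gauss_gt0.
- rewrite ltW ?expR_gt0 //= expR_lt1 oppr_lt0 invr_gt0.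
  by rewrite mulr_gt0 ?s2_gt0 // exprn_gt0 // Delta_gt0R.
- by move=> m; rewrite gaussN; split; apply: gauss_le_geometric.
Qed.

Definition gauss_mass : R := limn (fun N => box_sum N gauss).

Lemma gauss_mass_ge1 : 1 <= gauss_mass.
Proof.
have := nondecreasing_cvgn_le _ is_cvg_box_sum_gauss 0.
rewrite /box_sum big_ord1 /= gauss0; apply.
by apply: box_sum_nondecreasing => k; apply: ltW; apply: gauss_gt0.
Qed.

Lemma cvg_box_sum_gauss_shift (s : nat) :
  (fun N => box_sum N (fun k => gauss (k - s%:Z))) @ \oo --> gauss_mass.
Proof. exact: cvg_box_sum_shift gauss_weighted_le is_cvg_box_sum_gauss. Qed.

Lemma cvg_box_sum_gauss_moment_shift (s : nat) :
  (fun N => box_sum N (fun k => gauss_moment (k - s%:Z))) @ \oo --> 0.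
Proof.
apply: cvg_box_sum_shift gauss_moment_weighted_le _.
by under eq_fun do rewrite (box_sum_odd _ gauss_momentN); exact: cvg_cst.
Qed.

Lemma Znorm_mass : Znorm Delta sigma = gauss_mass ^+ 2.
Proof.
rewrite /Znorm lattice_sumE.
have -> : (fun d : lattice => expR (- (((d.1%:~R / Delta%:R) ^+ 2
                 + (d.2%:~R / Delta%:R) ^+ 2) / s2)))
    = (fun a => gauss a.1 * gauss a.2).
  by apply/funext => d; rewrite /gauss -expRD mulrDl opprD.
under eq_fun do rewrite lattice_box_sum_mul.
rewrite expr2; apply: cvg_lim; first exact: Rhausdorff.
exact: cvgM is_cvg_box_sum_gauss is_cvg_box_sum_gauss.
Qed.

Lemma Znorm_gt0 : 0 < Znorm Delta sigma.
Proof. by rewrite Znorm_mass exprn_gt0 // (lt_le_trans ltr01 gauss_mass_ge1). Qed.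

Definition kernel (a : lattice) (x : grid Delta) : R :=
  (Znorm Delta sigma)^-1 * expR (- (sqdist a x / s2)).

Lemma kernelE a x : kernel a x =
  (Znorm Delta sigma)^-1 * (gauss (a.1 - (x.1 : nat)%:Z) * gauss (a.2 - (x.2 : nat)%:Z)).
Proof. by rewrite /kernel /sqdist /gauss -expRD mulrDl opprD !intrB. Qed.

Lemma kernel_gt0 a x : 0 < kernel a x.
Proof. by rewrite /kernel mulr_gt0 ?invr_gt0 ?Znorm_gt0 ?expR_gt0. Qed.

Lemma HtildeE (r : grid Delta -> R) a : Htilde sigma r a = \sum_x kernel a x * r x.
Proof. by []. Qed.

Lemma Htilde_gt0 (r : grid Delta -> R) a : is_distr r -> 0 < Htilde sigma r a.
Proof.
move=> [r0 r1]; have kr0 x : 0 <= kernel a x * r x by rewrite mulr_ge0 // ltW // kernel_gt0.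
rewrite HtildeE lt0r sumr_ge0 ?andbT //.
apply: contra_neq (oner_neq0 R) => /(psumr_eq0P (fun x _ => kr0 x)) r_eq0.
rewrite -r1 big1 // => x _; have := r_eq0 x isT.
by move/eqP; rewrite mulf_eq0 gt_eqF ?kernel_gt0 //= => /eqP.
Qed.

Lemma ln_kernel_ratio a x y : ln (kernel a x / kernel a y) = (sqdist a y - sqdist a x) / s2.
Proof.
have -> : kernel a x / kernel a y = expR (- (sqdist a x / s2)) / expR (- (sqdist a y / s2)).
  by rewrite /kernel; field; rewrite !gt_eqF ?expR_gt0 ?Znorm_gt0.
by rewrite -expRB expRK; field; rewrite gt_eqF ?s2_gt0.
Qed.

Definition grid_dx (x y : grid Delta) : R := ((x.1 : nat)%:R - (y.1 : nat)%:R) / Delta%:R.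
Definition grid_dy (x y : grid Delta) : R := ((x.2 : nat)%:R - (y.2 : nat)%:R) / Delta%:R.
Definition grid_sqdist (x y : grid Delta) : R := grid_dx x y ^+ 2 + grid_dy x y ^+ 2.

(* [|a - y|^2 - |a - x|^2 = |x - y|^2 + 2 <a - x, x - y>]. *)
Lemma kernel_sqdist_diffE x y a : kernel a x * ((sqdist a y - sqdist a x) / s2) =
  ((Znorm Delta sigma)^-1 / s2) *
    (grid_sqdist x y * (gauss (a.1 - (x.1 : nat)%:Z) * gauss (a.2 - (x.2 : nat)%:Z))
     + 2 * grid_dx x y * (gauss_moment (a.1 - (x.1 : nat)%:Z) * gauss (a.2 - (x.2 : nat)%:Z))
     + 2 * grid_dy x y * (gauss (a.1 - (x.1 : nat)%:Z) * gauss_moment (a.2 - (x.2 : nat)%:Z))).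
Proof.
rewrite kernelE /gauss_moment /sqdist /grid_sqdist /grid_dx /grid_dy !intrB -!pmulrn.
by field; rewrite !gt_eqF ?Znorm_gt0 ?s2_gt0 ?Delta_gt0R.
Qed.

Lemma cvg_box_sum_kernel_sqdist_diff x y :
  (fun N => lattice_box_sum N (fun a => kernel a x * ((sqdist a y - sqdist a x) / s2)))
    @ \oo --> grid_sqdist x y / s2.
Proof.
set s := (x.1 : nat); set t := (x.2 : nat).
under eq_fun do rewrite (eq_lattice_box_sum _ (kernel_sqdist_diffE x y)) lattice_box_sumZ
  !lattice_box_sumD !lattice_box_sumZ
  (lattice_box_sum_mul _ (fun k => gauss (k - s%:Z)) (fun k => gauss (k - t%:Z)))
  (lattice_box_sum_mul _ (fun k => gauss_moment (k - s%:Z)) (fun k => gauss (k - t%:Z)))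
  (lattice_box_sum_mul _ (fun k => gauss (k - s%:Z)) (fun k => gauss_moment (k - t%:Z))).
have -> : grid_sqdist x y / s2 = (Znorm Delta sigma)^-1 / s2 *
    (grid_sqdist x y * (gauss_mass * gauss_mass) + 2 * grid_dx x y * (0 * gauss_mass)
     + 2 * grid_dy x y * (gauss_mass * 0)).
  rewrite Znorm_mass !mul0r !mulr0 !addr0; field.
  by rewrite !gt_eqF ?s2_gt0 // (lt_le_trans ltr01 gauss_mass_ge1).
have G1 := cvg_box_sum_gauss_shift s; have G2 := cvg_box_sum_gauss_shift t.
have M1 := cvg_box_sum_gauss_moment_shift s; have M2 := cvg_box_sum_gauss_moment_shift t.
apply: cvgM; first exact: cvg_cst.
apply: cvgD; first apply: cvgD.
all: by apply: cvgM; [exact: cvg_cst | apply: cvgM].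
Qed.

Lemma is_cvg_box_sum_Htilde (r : grid Delta -> R) :
  cvgn (fun N => lattice_box_sum N (Htilde sigma r)).
Proof.
under eq_fun do rewrite (eq_lattice_box_sum _ (HtildeE r)) lattice_box_sum_sum.
apply/cvg_ex; eexists; apply: cvg_sum => x.
under eq_fun do rewrite (eq_lattice_box_sum _ (fun a => mulrC (kernel a x) (r x)))
  lattice_box_sumZ (eq_lattice_box_sum _ (kernelE^~ x)) lattice_box_sumZ
  (lattice_box_sum_mul _ (fun k => gauss (k - (x.1 : nat)%:Z))
                         (fun k => gauss (k - (x.2 : nat)%:Z))).
do 2 (apply: cvgM; first exact: cvg_cst).
by apply: cvgM; apply: cvg_box_sum_gauss_shift.
Qed.


Lemma grid_sqdist_le_l1dist x y : grid_sqdist x y <= l1dist x y.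
Proof.
have D0 := Delta_gt0R.
have gap_le1 (i j : 'I_Delta) : `|((i : nat)%:R - (j : nat)%:R) / Delta%:R : R| <= 1.
  rewrite normrM normfV (ger0_norm (ltW D0)) ler_pdivrMr // mul1r ler_norml.
  have := ltn_ord i; have := ltn_ord j; rewrite -!(ltr_nat R) => ji ii.
  by have := ler0n R i; have := ler0n R j; move=> j0 i0; apply/andP; split; lra.
have sqr_le t : `|t| <= 1 -> t ^+ 2 <= `|t| :> R.
  by move=> t1; rewrite -real_normK ?num_real //; have := normr_ge0 t; nra.
by apply: lerD; apply: sqr_le; apply: gap_le1.
Qed.

Section Coupling.
Variables (p q : grid Delta -> R) (gam : grid Delta -> grid Delta -> R).
Hypotheses (p_distr : is_distr p) (q_distr : is_distr q) (gam_coupling : is_coupling p q gam).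

Local Notation Hp := (Htilde sigma p).
Local Notation Hq := (Htilde sigma q).

Lemma kl_density_le_coupling a :
  Hp a * ln (Hp a / Hq a)
    <= \sum_x \sum_y gam x y * (kernel a x * ((sqdist a y - sqdist a x) / s2)).
Proof.
have [gam0 [gam_p gam_q]] := gam_coupling.
have HpE : Hp a = \sum_x \sum_y gam x y * kernel a x.
  rewrite HtildeE; apply: eq_bigr => x _; rewrite -gam_p mulr_sumr.
  by apply: eq_bigr => y _; rewrite mulrC.
have HqE : Hq a = \sum_x \sum_y gam x y * kernel a y.
  rewrite HtildeE exchange_big; apply: eq_bigr => y _; rewrite -gam_q mulr_sumr.
  by apply: eq_bigr => x _; rewrite mulrC.
have Hp0 := Htilde_gt0 a p_distr; have Hq0 := Htilde_gt0 a q_distr.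
under eq_bigr do under eq_bigr do rewrite -ln_kernel_ratio mulrA.
rewrite HpE HqE in Hp0 Hq0 *; rewrite !pair_big /= in Hp0 Hq0 *.
apply: (log_sum_le (w := fun xy => gam xy.1 xy.2) (a := fun xy => kernel a xy.1)
  (b := fun xy => kernel a xy.2)) Hp0 Hq0 => [xy|xy|xy]; first exact: gam0.
all: exact: kernel_gt0.
Qed.

Lemma cvg_box_sum_coupling_bound :
  (fun N => lattice_box_sum N (fun a =>
     \sum_x \sum_y gam x y * (kernel a x * ((sqdist a y - sqdist a x) / s2))))
    @ \oo --> \sum_x \sum_y gam x y * (grid_sqdist x y / s2).
Proof.
under eq_fun do rewrite lattice_box_sum_sum; apply: cvg_sum => x.
under eq_fun do rewrite lattice_box_sum_sum; apply: cvg_sum => y.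
under eq_fun do rewrite lattice_box_sumZ.
by apply: cvgM; [exact: cvg_cst | exact: cvg_box_sum_kernel_sqdist_diff].
Qed.

Lemma KL_Htilde_le_cost : KL Hp Hq <= transport_cost gam / s2.
Proof.
have [gam0 _] := gam_coupling.
apply: le_trans (ler_lattice_sum (u := fun a => Hq a - Hp a) _ kl_density_le_coupling _
  cvg_box_sum_coupling_bound) _.
- by move=> a; apply: kl_term_ge0; apply: Htilde_gt0.
- rewrite (_ : (fun N => _) = (fun N => lattice_box_sum N Hq - lattice_box_sum N Hp)).
    exact: is_cvgB (is_cvg_box_sum_Htilde (r := q)) (is_cvg_box_sum_Htilde (r := p)).
  by apply/funext => N; exact: lattice_box_sumB.
rewrite /transport_cost mulr_suml; apply: ler_sum => x _.
rewrite mulr_suml; apply: ler_sum => y _.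
rewrite mulrA; apply: ler_wpM2r; first by rewrite invr_ge0 ltW // s2_gt0.
by apply: ler_wpM2l => //; exact: grid_sqdist_le_l1dist.
Qed.

End Coupling.

End Smoothing.

Lemma is_distr_gt0 (R : realType) (Delta : nat) (p : grid Delta -> R) :
  is_distr p -> (0 < Delta)%N.
Proof.
case=> _; rewrite lt0n; apply: contra_eqN => /eqP Delta0.
rewrite big1 ?(eq_sym 0) ?oner_eq0 // => x _.
by have := ltn_ord x.1; move: (x.1 : nat); rewrite Delta0.
Qed.

Lemma is_coupling_mul (R : realType) (Delta : nat) (p q : grid Delta -> R) :
  is_distr p -> is_distr q -> is_coupling p q (fun x y => p x * q y).
Proof.
move=> [p0 p1] [q0 q1]; split; first by move=> x y; rewrite mulr_ge0.
by split=> [x|y]; rewrite -?mulr_sumr -?mulr_suml ?q1 ?p1 ?mulr1 ?mul1r.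
Qed.

Theorem lemma9 (R : realType) (Delta : nat) (p q : grid Delta -> R) (sigma : R) :
  is_distr p -> is_distr q -> 0 < sigma ->
  KL (Htilde sigma p) (Htilde sigma q) <= EMD p q / (2 * sigma ^+ 2).
Proof.
move=> p_distr q_distr sigma_gt0.
have Delta_gt0 := is_distr_gt0 p_distr.
have s2_gt0 := s2_gt0 sigma_gt0.
rewrite ler_pdivlMr //; apply: lb_le_inf.
  by exists (transport_cost (fun x y => p x * q y)), (fun x y => p x * q y);
    first exact: is_coupling_mul.
move=> _ [gam gam_coupling <-]; rewrite -ler_pdivlMr //.
exact: KL_Htilde_le_cost.
Qed.
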